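(* Let $n\ge1$, $k\ge1$. The operations $\gamma\mapsto\sigma_l\cdot\gamma$ ($l\in\{1,\dots,k-1\}$) on $\Sigma_n(k)$ extend (uniquely) to an action of $\mathfrak S_k$ on $\Sigma_n(k)$. Moreover, $P$ is equivariant for this action and the action of $\mathfrak S_k$ on sequences, and preserves stabilisers: for all $\gamma\in\Sigma_n(k)$ and $\pi\in\mathfrak S_k$, $\pi\cdot P(\gamma)=P(\gamma)$ if and only if $\pi\cdot\gamma=\gamma$.
   Context: Let $n\ge1$. $\mathfrak S_n$ is the symmetric group on $\{1,\dots,n\}$; products are composed right to left. $\mathsf T_n$ is the set of transpositions; a transposition is always written $(i\,j)$ with $i<j$. For $\sigma\in\mathfrak S_n$, $|\sigma|=n-(\text{number of cycles of }\sigma\text{, fixed points counted})$; $\sigma_1\preccurlyeq\sigma_2$ iff $|\sigma_2|=|\sigma_1|+|\sigma_1^{-1}\sigma_2|$. $\Sigma_n(k)=\{(\tau_1,\dots,\tau_k)\in(\mathsf T_n)^k : |\tau_1\cdots\tau_k|=k,\ \tau_1\cdots\tau_k\preccurlyeq(1\,2\,\dots\,n)\}$. $P:\Sigma_n(k)\to\{1,\dots,n-1\}^k$ sends $((i_1\,j_1),\dots,(i_k\,j_k))$ to $(i_1,\dots,i_k)$. The group $\mathfrak S_k$ acts on sequences by $\pi\cdot(x_1,\dots,x_k)=(x_{\pi^{-1}(1)},\dots,x_{\pi^{-1}(k)})$. Let $\sigma_l=(l\;l+1)\in\mathfrak S_k$ be the Coxeter generators. For $(g_1,\dots,g_k)\in(\mathsf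 T_n)^k$ define $\beta_l\cdot(g_1,\dots,g_k)=(g_1,\dots,g_{l-1},g_{l+1},g_{l+1}^{-1}g_lg_{l+1},g_{l+2},\dots,g_k)$ and $\beta_l^{-1}\cdot(g_1,\dots,g_k)=(g_1,\dots,g_{l-1},g_lg_{l+1}g_l^{-1},g_l,g_{l+2},\dots,g_k)$. For $\gamma=((i_1\,j_1),\dots,(i_k\,j_k))\in\Sigma_n(k)$ define $\sigma_l\cdot\gamma=\gamma$ if $i_l=i_{l+1}$, $\sigma_l\cdot\gamma=\beta_l\cdot\gamma$ if $i_l<i_{l+1}$, and $\sigma_l\cdot\gamma=\beta_l^{-1}\cdot\gamma$ if $i_l>i_{l+1}$ (this lies in $\Sigma_n(k)$). *)

From mathcomp Require Import all_boot all_fingroup.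
Set Implicit Arguments. Unset Strict Implicit. Unset Printing Implicit Defensive.
Local Open Scope group_scope.

(* Points {1,...,n} are represented by 'I_n = {0,...,n-1} (shift by one). *)

(* Composition right to left: (pmul s t) x = s (t x).
   (MathComp's group law s * t is "first s, then t".) *)
Definition pmul (T : finType) (s t : {perm T}) : {perm T} := t * s.

Definition prodr (T : finType) (g : seq {perm T}) : {perm T} := foldr (@pmul T) 1 g.

Definition plen (n : nat) (s : {perm 'I_n}) : nat := n - #|porbits s|.

Definition pleq (n : nat) (s1 s2 : {perm 'I_n}) : bool :=
  plen s2 == plen s1 + plen (pmul s1^-1 s2).

(* the long cycle (1 2 ... n) : i |-> i+1 mod n *)
Definition longcycle (n : nat) : {perm 'I_n} := perm (@ordS_inj n).

Definition is_transp (n : nat) (g : {perm 'I_n}) : bool :=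
  [exists i : 'I_n, exists j : 'I_n, (i < j) && (g == tperm i j)].

Definition tlow (n : nat) (g : {perm 'I_n}) : nat :=
  oapp (fun i : 'I_n => val i) 0
    [pick i : 'I_n | [exists j : 'I_n, (i < j) && (g == tperm i j)]].

Definition Sigma (n k : nat) (g : k.-tuple {perm 'I_n}) : bool :=
  [&& all (@is_transp n) g, plen (prodr g) == k & pleq (prodr g) (longcycle n)].

Definition Pmap (n k : nat) (g : k.-tuple {perm 'I_n}) : k.-tuple nat :=
  map_tuple (@tlow n) g.

Definition seq_act (k : nat) (T : Type) (pi : {perm 'I_k}) (x : k.-tuple T) : k.-tuple T :=
  [tuple tnth x (pi^-1 l) | l < k].

(* beta_l and beta_l^-1, acting at positions l and l1 = l+1 *)
Definition beta (n k : nat) (l l1 : 'I_k) (g : k.-tuple {perm 'I_n}) :=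
  [tuple if m == l then tnth g l1
         else if m == l1 then pmul (pmul (tnth g l1)^-1 (tnth g l)) (tnth g l1)
         else tnth g m | m < k].

Definition betainv (n k : nat) (l l1 : 'I_k) (g : k.-tuple {perm 'I_n}) :=
  [tuple if m == l then pmul (pmul (tnth g l) (tnth g l1)) (tnth g l)^-1
         else if m == l1 then tnth g l
         else tnth g m | m < k].

Definition sigma_op (n k : nat) (l l1 : 'I_k) (g : k.-tuple {perm 'I_n}) :=
  let i := tlow (tnth g l) in let i' := tlow (tnth g l1) in
  if i == i' then g else if i < i' then beta l l1 g else betainv l l1 g.

Definition is_Sk_action (n k : nat)
  (act : {perm 'I_k} -> k.-tuple {perm 'I_n} -> k.-tuple {perm 'I_n}) : Prop :=
  [/\ forall pi g, Sigma g -> Sigma (act pi g),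
      forall g, Sigma g -> act 1 g = g &
      forall pi1 pi2 g, Sigma g -> act (pmul pi1 pi2) g = act pi1 (act pi2 g)].

Definition extends_sigma (n k : nat)
  (act : {perm 'I_k} -> k.-tuple {perm 'I_n} -> k.-tuple {perm 'I_n}) : Prop :=
  forall (l l1 : 'I_k), val l1 = (val l).+1 ->
    forall g, Sigma g -> act (tperm l l1) g = sigma_op l l1 g.

From mathcomp Require Import all_boot all_fingroup zify.
Set Implicit Arguments. Unset Strict Implicit. Unset Printing Implicit Defensive.
Local Open Scope group_scope.

(* The heart of the proof is a rigidity statement (Sigma_seq_unique): an element
   of Sigma_n(k) is determined by the product of its factors together with its
   sequence of lower endpoints P(gamma). To prove it, pick the last factor (x y)
   carrying the maximal lower endpoint x, move it to the end by Hurwitz moves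
   (which conjugate the later factors without changing their lower endpoints),
   and show that then y is the image of x under the product (last_factor_max);
   this uses that permutations below the long cycle are noncrossing.
   Each sigma_l keeps the product and permutes P(gamma) by (l l+1)
   (sigma_op_spec). So pi . gamma can be defined as the unique element of
   Sigma_n(k) with the product of gamma and lower endpoints pi . P(gamma); it
   exists by induction along adjacent transpositions. The action laws, the
   extension and uniqueness properties, equivariance and the stabiliser
   statement then all follow from rigidity. *)

(* [lia] on the goal alone: proof contexts here are full of permutation facts
   that are irrelevant to (and only slow down) the arithmetic. *)
Ltac lia_goal := repeat match goal with H : _ |- _ => clear H end; lia.

(* Equality of ordinals, read on their values so that [lia] can use it. *)
Lemma eq_ordE (m : nat) (x y : 'I_m) : (x == y) = (x == y :> nat).
Proof. by []. Qed.

Section AbsoluteLength.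
Variable n : nat.
Local Notation T := 'I_n.
Implicit Types (s t u X : {perm T}) (x y : T) (L : seq {perm T}).

Lemma pmulE s t x : pmul s t x = s (t x).
Proof. by rewrite /pmul permM. Qed.

Lemma pmulA s t u : pmul s (pmul t u) = pmul (pmul s t) u.
Proof. by rewrite /pmul mulgA. Qed.

Definition ncycles s := #|porbits s|.

(* Cycles partition the n points. *)
Lemma ncycles_le s : (ncycles s <= n)%N.
Proof. by apply: leq_trans (leq_imset_card _ _) _; rewrite card_ord. Qed.

(* Multiplying by (x y) merges two cycles or splits one (porbits_mul_tperm). *)
Lemma ncycles_tperm s x y :
  (ncycles (tperm x y * s) + (x \notin porbit s y).*2 = ncycles s + (x != y))%N.
Proof. exact: porbits_mul_tperm. Qed.

(* Inverting keeps the cycle type, hence the length. *)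
Lemma plenV s : plen s^-1 = plen s.
Proof. by rewrite /plen porbitsV. Qed.

Lemma plen1 : plen (1 : {perm T}) = 0%N.
Proof.
rewrite /plen -{1}(card_ord n) (card_imset _ _) ?subnn // => x y /eqP.
by rewrite eq_porbit_mem => /porbitP [i]; rewrite expg1n perm1.
Qed.

Lemma plen_eq0 s : plen s = 0%N -> s = 1.
Proof.
move=> h0; have: #|porbits s| == #|'I_n|.
  by rewrite card_ord eqn_leq ncycles_le -subn_eq0 -[(n - _)%N]/(plen s) h0.
move/imset_injP => inj; apply/permP => x; rewrite perm1; apply: inj => //.
by apply/eqP; rewrite eq_porbit_mem (mem_porbit s 1).
Qed.

Lemma plen_tperm_split s x y :
  x != y -> x \in porbit s y -> plen s = (plen (tperm x y * s)).+1.
Proof.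
move=> nxy hxy; have := ncycles_tperm s x y; rewrite hxy nxy /plen -!/(ncycles _) /=.
have := ncycles_le s; have := ncycles_le (tperm x y * s); lia.
Qed.

Lemma plen_tperm_merge s x y :
  x \notin porbit s y -> plen (tperm x y * s) = (plen s).+1.
Proof.
move=> hxy; have nxy : x != y by apply: contraNneq hxy => ->; apply: porbit_id.
have := ncycles_tperm s x y; rewrite hxy nxy /plen -!/(ncycles _) /=.
have := ncycles_le s; have := ncycles_le (tperm x y * s); lia.
Qed.

Lemma plen_tpermM s x y : (plen (tperm x y * s) <= (plen s).+1)%N.
Proof.
have [->|nxy] := eqVneq x y; first by rewrite tperm1 mul1g.
case: (boolP (x \in porbit s y)) => [hxy|/plen_tperm_merge -> //].
by rewrite (plen_tperm_split nxy hxy) leqW.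
Qed.

Lemma plen_mul_tperm s x y : (plen (s * tperm x y) <= (plen s).+1)%N.
Proof. by rewrite -plenV invMg tpermV -(plenV s) plen_tpermM. Qed.

Lemma is_transpP t : is_transp t -> exists x y, (x < y)%N /\ t = tperm x y.
Proof. by case/existsP=> x /existsP [y /andP [lt /eqP ->]]; exists x, y. Qed.

Lemma is_transp_tperm x y : x != y -> is_transp (tperm x y).
Proof.
move=> nxy; apply/existsP; case: (ltngtP x y) => [lt|gt|/val_inj e].
- by exists x; apply/existsP; exists y; rewrite lt eqxx.
- by exists y; apply/existsP; exists x; rewrite gt tpermC eqxx.
- by rewrite e eqxx in nxy.
Qed.

Lemma prodr_cat L1 L2 : prodr (L1 ++ L2) = pmul (prodr L1) (prodr L2).
Proof. by elim: L1 => [|a L1 IH] /=; rewrite /pmul ?mulg1 // -/(prodr _) IH mulgA. Qed.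

Lemma prodr_rcons L t : prodr (rcons L t) = pmul (prodr L) t.
Proof. by rewrite -cats1 prodr_cat /prodr /= /pmul mul1g. Qed.

Lemma prodr_fix L z : all (fun a : {perm T} => a z == z) L -> prodr L z = z.
Proof.
elim: L => [|a L IH] /=; first by rewrite perm1.
by case/andP=> /eqP ha hL; rewrite -/(prodr L) pmulE IH.
Qed.

Lemma plen_prodr_pmul L X :
  all (@is_transp n) L -> (plen (pmul (prodr L) X) <= size L + plen X)%N.
Proof.
elim: L X => [|a L IH] X /=; first by rewrite /pmul mulg1.
case/andP=> /is_transpP [x [y [_ ->]]] hL; rewrite -pmulA.
apply: leq_trans (plen_mul_tperm _ x y) _; exact: IH.
Qed.

Lemma plen_pmul_prodr L X :
  all (@is_transp n) L -> (plen (pmul X (prodr L)) <= plen X + size L)%N.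
Proof.
elim: L X => [|a L IH] X /=; first by rewrite /pmul mul1g addn0.
case/andP=> /is_transpP [x [y [_ ->]]] hL; rewrite pmulA addnS -addSn.
apply: leq_trans (IH _ hL) _; rewrite leq_add2r; exact: plen_tpermM.
Qed.

Lemma plen_prodr L : all (@is_transp n) L -> (plen (prodr L) <= size L)%N.
Proof.
by move=> /(plen_prodr_pmul 1); rewrite /pmul mul1g plen1 addn0.
Qed.

Lemma exists_moved X : X != 1 -> exists x, X x != x.
Proof.
move=> hX; case: (pickP (fun x => X x != x)) => [x hx|fixed]; first by exists x.
by case/eqP: hX; apply/permP => x; rewrite perm1; apply/eqP/negbFE/fixed.
Qed.

Lemma plen_peel X x : X x != x -> plen X = (plen (pmul (tperm x (X x)) X)).+1.
Proof.
move=> hx; rewrite /pmul -(plenV (X * _)) invMg tpermV -(plenV X).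
apply: plen_tperm_split; first by rewrite eq_sym.
by rewrite porbitV porbit_sym (mem_porbit X 1).
Qed.

Lemma minimal_factorization s :
  exists L, [/\ all (@is_transp n) L, size L = plen s & prodr L = s].
Proof.
move e: (plen s) => m; elim: m s e => [|m IH] s e.
  by exists [::]; rewrite (plen_eq0 e).
have /exists_moved [x hx] : s != 1 by apply: contra_eqN e => /eqP ->; rewrite plen1.
have hm : plen (pmul (tperm x (s x)) s) = m by apply: eq_add_S; rewrite -e -plen_peel.
have [L [hL hs hp]] := IH _ hm.
exists (tperm x (s x) :: L); split => /=.
- by rewrite hL andbT is_transp_tperm // eq_sym.
- by rewrite hs.
- by rewrite -/(prodr L) hp /pmul -mulgA tperm2 mulg1.
Qed.

Lemma plen_pmul_le s t : (plen (pmul s t) <= plen s + plen t)%N.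
Proof.
by have [L [hL <- <-]] := minimal_factorization t; apply: plen_pmul_prodr.
Qed.

End AbsoluteLength.

(* cyc_between a b c: b lies in the open cyclic interval from a to c, read upwards
   modulo n; when a = c this interval is the whole circle except a. *)
Definition cyc_between (a b c : nat) : bool :=
  [|| (a < b < c)%N, (c < a < b)%N, (b < c < a)%N | (a == c) && (b != a)].

Section Noncrossing.
Variable n : nat.
Local Notation T := 'I_n.
Implicit Types (s u v w : {perm T}) (x y z a b : T).

(* w is noncrossing (and cyclically increasing on each cycle): every arc from x to
   w x is w-stable. This is the combinatorial shadow of w <= (1 2 ... n). *)
Definition noncrossing w :=
  forall x z, cyc_between x z (w x) -> cyc_between x (w z) (w x).

Lemma porbit_stable (P : pred T) w y y' :
  (forall z, P z -> P (w z)) -> P y -> y' \in porbit w y -> P y'.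
Proof.
move=> hP hy /porbitP [i ->]; elim: i => [|i IH]; first by rewrite expg0 perm1.
by rewrite expgSr permM; apply: hP.
Qed.

Lemma porbit_fixpoint w x y : w x = x -> y \in porbit w x -> y = x.
Proof.
move=> hx hy; apply/eqP; apply: (porbit_stable (P := pred1 x)) hy => //= z /eqP ->.
by rewrite hx.
Qed.

Lemma porbit_step w x : porbit w (w x) = porbit w x.
Proof. by have := porbit_perm w 1 x; rewrite expg1. Qed.

Lemma mem_porbit_step w x y : (w x \in porbit w y) = (x \in porbit w y).
Proof. by rewrite -!eq_porbit_mem porbit_step. Qed.

Lemma noncrossing_porbit w x y :
  noncrossing w -> y \in porbit w x -> ~~ cyc_between x y (w x).
Proof.
move=> hw hy; apply/negP => hc; rewrite porbit_sym in hy.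
have := porbit_stable (hw x) hc hy; rewrite /cyc_between; lia_goal.
Qed.

(* The long cycle (1 2 ... n) itself is noncrossing: every arc from x to x+1
   is empty. *)
Lemma noncrossing_longcycle : noncrossing (longcycle n).
Proof.
move=> x z; rewrite /longcycle permE /cyc_between /= => h; exfalso.
have hx := ltn_ord x; have hz := ltn_ord z; move: h.
case: (ltnP x.+1 n) => hl; first by rewrite modn_small //; lia.
have -> : x.+1 = n by lia.
by rewrite modnn; lia.
Qed.

Lemma noncrossing_climb w q y :
  noncrossing w -> y \in porbit w q -> (q < y)%N -> (q < w q <= y)%N.
Proof.
move=> hw hy qy; have wq : w q != q.
  by apply: contraTneq qy => /porbit_fixpoint /(_ hy) ->; rewrite ltnn.
move: qy wq; have := noncrossing_porbit hw hy; rewrite ?eq_ordE /cyc_between.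
lia_goal.
Qed.

Lemma noncrossing_split_arc w a b : noncrossing w -> a != b -> b \in porbit w a ->
  forall z, cyc_between a z (w b) -> cyc_between a ((tperm a b * w)%g z) (w b).
Proof.
move=> hw nab hba z hz; have hab : a \in porbit w b by rewrite porbit_sym.
set v := tperm a b * w.
have va : v a = w b by rewrite /v permM tpermL.
have vb : v b = w a by rewrite /v permM tpermR.
have vz y : y != a -> y != b -> v y = w y.
  by move=> ya yb; rewrite /v permM tpermD // eq_sym.
have wa : w a != a by apply: contra_neq nab => /porbit_fixpoint /(_ hba) ->.
have wb : w b != b by apply: contra_neq nab => /porbit_fixpoint /(_ hab).
have [wba|wba] := eqVneq (w b) a.
  have za : z != a by apply: contraTneq hz => ->; rewrite /cyc_between wba; lia_goal.
  have : v z != v a by apply: contra_neq za => /perm_inj.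
  by rewrite va wba; move: hz; rewrite wba /cyc_between ?eq_ordE; lia_goal.
have b_arc : cyc_between a b (w b).
  have := noncrossing_porbit hw hab; move: nab wb wba.
  by rewrite /cyc_between ?eq_ordE; lia_goal.
have [->|zb] := eqVneq z b.
  have := noncrossing_porbit hw hba; rewrite vb.
  by move: b_arc nab wa; rewrite /cyc_between ?eq_ordE; lia_goal.
have [za|za] := eqVneq z a; first by move: hz; rewrite za /cyc_between; lia_goal.
rewrite vz //.
have [hbz|haz] : cyc_between b z (w b) \/ cyc_between a z b.
  by move: hz b_arc zb za; rewrite /cyc_between ?eq_ordE; lia_goal.
  by have := hw _ _ hbz; move: b_arc; rewrite /cyc_between ?eq_ordE; lia_goal.
(* z lies strictly between a and b: w z cannot leave the arc (a, b], else the
   cycle of z would cross the cycle through a and b *)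
have [//|hy] :
    cyc_between a (w z) (w b) \/ (w z == a :> nat) || cyc_between b (w z) a.
  by move: haz b_arc; rewrite /cyc_between ?eq_ordE; lia_goal.
have hzb : cyc_between z b (w z).
  by move: haz hy nab; rewrite /cyc_between ?eq_ordE; lia_goal.
have := porbit_stable (hw z) hzb hab.
by move: haz hy nab; rewrite /cyc_between ?eq_ordE; lia_goal.
Qed.

Lemma noncrossing_split w a b :
  noncrossing w -> a != b -> b \in porbit w a -> noncrossing (tperm a b * w).
Proof.
move=> hw nab hba x z; have hab : a \in porbit w b by rewrite porbit_sym.
have vz y : y != a -> y != b -> (tperm a b * w) y = w y.
  by move=> ya yb; rewrite permM tpermD // eq_sym.
have [->|xa] := eqVneq x a; first by rewrite permM tpermL; apply: noncrossing_split_arc.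
have [->|xb] := eqVneq x b.
  by rewrite permM tpermR tpermC; apply: noncrossing_split_arc; rewrite 1?eq_sym.
rewrite vz // => hz.
have [za|za] := eqVneq z a.
  rewrite za permM tpermL; apply: (hw x); apply: porbit_stable (hw x) _ hba.
  by rewrite -za.
have [zb|zb] := eqVneq z b.
  rewrite zb permM tpermR; apply: (hw x); apply: porbit_stable (hw x) _ hab.
  by rewrite -zb.
by rewrite vz //; apply: (hw x).
Qed.

Local Notation c := (longcycle n).

(* Induction on the distance d from u to c: the last step cuts a cycle. *)
Lemma noncrossing_of_le_dist d u :
  plen (pmul u^-1 c) = d -> plen c = (plen u + d)%N -> noncrossing u.
Proof.
elim: d u => [|d IH] u hd hc.
  suff <- : c = u by apply: noncrossing_longcycle.
  by move/plen_eq0: hd; rewrite /pmul => /(congr1 (fun s => s * u)); rewrite mulgKV mul1g.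
set X := pmul u^-1 c in hd.
have /exists_moved [x hx] : X != 1 by apply: contra_eqN hd => /eqP ->; rewrite plen1.
set y := X x in hx; set t := tperm x y; set u' := t * u.
have hX : plen (pmul t X) = d by apply: eq_add_S; rewrite -hd (plen_peel hx).
have eX : pmul u'^-1 c = pmul t X by rewrite /u' /X /pmul invMg tpermV mulgA.
have hu' : plen u' = (plen u).+1.
  have := plen_pmul_le u' (pmul u'^-1 c); rewrite /pmul mulgKV -/(pmul _ c) eX hX.
  have := plen_tpermM u x y; rewrite -/t -/u'; lia.
have hNu' : noncrossing u' by apply: (IH u'); [rewrite eX | rewrite hu' hc addSnnS].
have eu : u = t * u' by rewrite /u' tpermKg.
rewrite eu; apply: noncrossing_split; rewrite 1?eq_sym //.
rewrite porbit_sym; apply: contraT => /plen_tperm_merge; rewrite -/t -eu hu'.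
lia.
Qed.

Lemma noncrossing_of_le u : pleq u c -> noncrossing u.
Proof. by move/eqP; apply: noncrossing_of_le_dist. Qed.

End Noncrossing.

Section Factorizations.
Variable n : nat.
Local Notation T := 'I_n.
Local Notation c := (longcycle n).
Implicit Types (s t u g X : {perm T}) (x y z : T) (L A B : seq {perm T}).

Definition Sigma_seq L :=
  [&& all (@is_transp n) L, plen (prodr L) == size L & pleq (prodr L) c].

Lemma Sigma_seq_same L1 L2 : Sigma_seq L1 -> all (@is_transp n) L2 ->
  prodr L2 = prodr L1 -> size L2 = size L1 -> Sigma_seq L2.
Proof. by move=> /and3P [_ h1 h2] h3 hp hs; rewrite /Sigma_seq hp hs h1 h2 h3. Qed.

Lemma Sigma_seq_prefix L1 L2 : Sigma_seq (L1 ++ L2) -> Sigma_seq L1.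
Proof.
case/and3P; rewrite all_cat prodr_cat size_cat => /andP [h1 h2] /eqP hp /eqP hc.
set u := prodr L1 in hp hc *; set w := prodr L2 in hp hc.
have hu : plen u = size L1.
  by have := plen_pmul_prodr u h2; have := plen_prodr h1; rewrite -/u -/w; lia.
rewrite /Sigma_seq h1 hu eqxx /=; apply/eqP.
have e : pmul u^-1 c = pmul w (pmul (pmul u w)^-1 c).
  by rewrite /pmul invMg !mulgA mulgKV.
have := plen_pmul_le u (pmul u^-1 c); rewrite {1}/pmul mulgKV.
have := plen_prodr_pmul (pmul (pmul u w)^-1 c) h2; rewrite -/w -e -/u; lia.
Qed.

Lemma is_transp_conj g t : is_transp t -> is_transp (t ^ g).
Proof.
case/is_transpP=> x [y [lt ->]]; rewrite tpermJ; apply: is_transp_tperm.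
by rewrite (inj_eq perm_inj) eq_ordE; lia.
Qed.

Lemma all_transp_conj g L :
  all (@is_transp n) L -> all (@is_transp n) [seq t ^ g | t <- L].
Proof. by move=> /allP h; apply/allP => _ /mapP [t /h ht ->]; apply: is_transp_conj. Qed.

Lemma prodr_conj g L : pmul g (prodr L) = pmul (prodr [seq t ^ g | t <- L]) g.
Proof.
elim: L => [|a L IH] /=; first by rewrite /prodr /pmul /= mulg1 mul1g.
rewrite -/(prodr _) -/(prodr L) -[RHS]pmulA -IH !pmulA; congr pmul.
by rewrite /pmul /conjg mulKVg.
Qed.

Lemma factor_in_porbit L : all (@is_transp n) L -> plen (prodr L) = size L ->
  forall a z, a \in L -> a z \in porbit (prodr L) z.
Proof.
elim: L => [|a L IH] //= /andP [ha hL] hp b z; rewrite -/(prodr L) in hp *.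
set r := prodr L in hp *; have [x [y [_ ea]]] := is_transpP ha.
have hr : plen r = size L.
  have := plen_mul_tperm r x y; rewrite -ea -/(pmul a r) hp.
  have := plen_prodr hL; rewrite -/r; lia.
set rho := pmul a r in hp *.
have rho_a : rho * a = r by rewrite /rho /pmul -mulgA ea tperm2 mulg1.
have hxy : x \in porbit rho y.
  rewrite -porbitV; apply: contraT => /plen_tperm_merge.
  have -> : tperm x y * rho^-1 = r^-1.
    by rewrite /rho /pmul invMg ea tpermV mulgA tperm2 mul1g.
  rewrite !plenV hp hr; lia.
have a_orb q : a q \in porbit rho q.
  by rewrite ea; case: tpermP => [->|->|_ _]; rewrite ?porbit_id // porbit_sym.
have r_orb q : r q \in porbit rho q.
  have -> : r q = a (rho q) by rewrite -rho_a permM.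
  by rewrite -(porbit_step rho q); apply: a_orb.
rewrite inE => /orP [/eqP ->|hb]; first exact: a_orb.
apply: (porbit_stable (P := fun q => q \in porbit rho z)) (IH hL hr b z hb) => [q|].
  by rewrite -!eq_porbit_mem => /eqP <-; rewrite eq_porbit_mem r_orb.
exact: porbit_id.
Qed.

End Factorizations.

Section LowerEndpoints.
Variable n : nat.
Local Notation T := 'I_n.
Implicit Types (s t u g : {perm T}) (x y z : T) (L A B : seq {perm T}).

Lemma tlow_tperm x y : (x < y)%N -> tlow (tperm x y) = x.
Proof.
move=> lt; rewrite /tlow; case: pickP => [i /existsP [j /andP [lij /eqP e]] | none] /=.
  have moved z : tperm x y z != z -> (z == x) || (z == y).
    by case: tpermP => [->|->|]; rewrite ?eqxx ?orbT.
  have /moved : tperm x y i != i by rewrite e tpermL eq_ordE; lia.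
  have /moved : tperm x y j != j by rewrite e tpermR eq_ordE; lia.
  by move: lij lt; rewrite !eq_ordE; lia_goal.
by case/existsP: (negbT (none x)); exists y; rewrite lt eqxx.
Qed.

Lemma is_transp_tlow t :
  is_transp t -> exists x y, [/\ (x < y)%N, t = tperm x y & tlow t = x].
Proof. by case/is_transpP=> x [y [lt ->]]; exists x, y; rewrite tlow_tperm. Qed.

Lemma tlow_conj x y t :
  (x < y)%N -> is_transp t -> (tlow t < x)%N -> tlow (t ^ tperm x y) = tlow t.
Proof.
move=> lt /is_transp_tlow [p [q [lpq -> ->]]] hp; rewrite tpermJ.
have -> : tperm x y p = p by rewrite tpermD // eq_ordE; lia.
by apply: tlow_tperm; case: tpermP => [e|e|_ _]; rewrite ?e in lpq; lia.
Qed.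

Lemma map_tlow_conj x y B : (x < y)%N -> all (@is_transp n) B ->
  all (fun b => tlow b < x)%N B ->
  map (@tlow n) [seq b ^ tperm x y | b <- B] = map (@tlow n) B.
Proof.
move=> lt; elim: B => [|b B IH] //= /andP [hb hB] /andP [lb lB].
by rewrite tlow_conj // IH.
Qed.

Lemma porbit_meets_low L x z :
  all (@is_transp n) L -> plen (prodr L) = size L ->
  all (fun a => tlow a <= x)%N L -> prodr L z != z ->
  exists2 p : T, p \in porbit (prodr L) z & (p <= x)%N.
Proof.
move=> hL hp hlow hz.
have /allPn [a ha az] : ~~ all (fun a : {perm T} => a z == z) L.
  by apply: contra hz => /prodr_fix ->.
have [p [q [lpq ea la]]] := is_transp_tlow (allP hL a ha).
exists p; last by rewrite -la (allP hlow a ha).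
have := factor_in_porbit hL hp p ha; rewrite ea tpermL.
move: az; rewrite ea; case: tpermP => [->|->|_ _]; rewrite ?eqxx // => _ hq.
  exact: porbit_id.
by rewrite porbit_sym.
Qed.

Lemma last_factor_max L x y : Sigma_seq (rcons L (tperm x y)) -> (x < y)%N ->
  all (fun a => tlow a <= x)%N L -> prodr (rcons L (tperm x y)) x = y.
Proof.
set t := tperm x y => hS lt hlow.
have /and3P [hTL /eqP hpL _] : Sigma_seq L.
  by apply: (@Sigma_seq_prefix _ _ [:: t]); rewrite cats1.
move: hS; rewrite /Sigma_seq prodr_rcons size_rcons => /and3P [_ /eqP hsig hle].
set rho := prodr L in hpL hsig hle *; set sig := pmul rho t in hsig hle *.
have hN := noncrossing_of_le hle.
have rhoE : rho = t * sig by rewrite /sig /pmul mulgA tperm2 mul1g.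
have hyx : y \in porbit sig x.
  rewrite porbit_sym; apply: contraT => /plen_tperm_merge.
  by rewrite -/t -rhoE hsig hpL; lia.
(* the rho-cycle of y stays inside the arc (x, y] of the sig-cycle of x *)
pose Q := fun q : T => (x < q <= y)%N && (q \in porbit sig x).
have stableQ q : Q q -> Q (rho q).
  case/andP => hq qx; rewrite rhoE permM.
  have [->|qy] := eqVneq q y.
    by rewrite tpermR /Q mem_porbit_step porbit_id andbT noncrossing_climb.
  have hyq : y \in porbit sig q by rewrite -eq_porbit_mem in qx; rewrite (eqP qx).
  have xq : x != q by move: hq; rewrite eq_ordE; lia_goal.
  rewrite tpermD // 1?eq_sym //.
  rewrite /Q mem_porbit_step qx andbT.
  have := noncrossing_climb hN hyq; move: qy hq; rewrite eq_ordE; lia_goal.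
rewrite /sig pmulE tpermL; apply: contraTeq isT => ry.
have [p hp px] := porbit_meets_low hTL hpL hlow ry.
have Qy : Q y by rewrite /Q lt leqnn hyx.
have /andP [/andP [xp _] _] := porbit_stable stableQ Qy hp.
by move: px xp; lia_goal.
Qed.

End LowerEndpoints.

Lemma split_last_max (s : seq nat) : s != [::] ->
  exists A x B, [/\ s = A ++ x :: B, all (fun a => a <= x) A & all (fun b => b < x) B].
Proof.
elim: s => [|a s IH] // _; have [->|/IH [A [x [B [-> hA hB]]]]] := eqVneq s [::].
  by exists [::], a, [::].
have [ax|xa] := leqP a x; first by exists (a :: A), x, B; rewrite /= ax hA.
exists [::], a, (A ++ x :: B); split=> //=; rewrite all_cat /= xa.
apply/andP; split; apply/allP => b hb.
  by have := allP hA b hb; lia.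
by have := allP hB b hb; lia.
Qed.

Lemma map_eq_cat_cons (U V : Type) (f : U -> V) L A v B : map f L = A ++ v :: B ->
  exists A' u B', [/\ L = A' ++ u :: B', map f A' = A, f u = v & map f B' = B].
Proof.
elim: A L => [|a A IH] [|u L] //= [hu hL]; first by exists [::], u, L.
have [A' [u' [B' [-> hA' hu' hB']]]] := IH L hL.
by exists (u :: A'), u', B'; rewrite /= hu hA'.
Qed.

Section Uniqueness.
Variable n : nat.
Local Notation T := 'I_n.
Implicit Types (t : {perm T}) (L A B : seq {perm T}).

(* Move the last factor t = (x0 y) with maximal lower endpoint x0 to the end by
   Hurwitz moves: the factors after it get conjugated, keeping their lower
   endpoints, and by last_factor_max, y is the image of x0 under the product. *)
Lemma peel_last_max A t B (x : nat) : Sigma_seq (A ++ t :: B) -> tlow t = x ->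
  all (fun a => tlow a <= x)%N A -> all (fun b => tlow b < x)%N B ->
  let H := A ++ [seq b ^ t | b <- B] in
  exists x0 : T, [/\ val x0 = x, t = tperm x0 (prodr (A ++ t :: B) x0), Sigma_seq H,
    pmul (prodr H) t = prodr (A ++ t :: B) & map (@tlow n) H = map (@tlow n) (A ++ B)].
Proof.
move=> hS ht hA hB H; have /and3P [] := hS; rewrite all_cat /=.
move=> /and3P [hTA hTt hTB] _ _.
have [x0 [y [lt et lx]]] := is_transp_tlow hTt; rewrite -ht lx in hA hB.
have eprod : pmul (prodr H) t = prodr (A ++ t :: B).
  by rewrite !prodr_cat -pmulA -prodr_conj.
have hSH : Sigma_seq (rcons H (tperm x0 y)).
  rewrite -et; apply: (Sigma_seq_same hS); rewrite ?prodr_rcons //.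
  - by rewrite -cats1 !all_cat hTA all_transp_conj //= hTt.
  - by rewrite size_rcons !size_cat size_map /= addnS.
have hlowH : all (fun a => tlow a <= x0)%N H.
  rewrite all_cat hA; apply/allP => _ /mapP [b hb ->].
  by move: (allP hTB b hb) (allP hB b hb) => hb1 hb2; rewrite et tlow_conj // ltnW.
exists x0; split; rewrite -?lx //.
- by have := last_factor_max hSH lt hlowH; rewrite prodr_rcons -et eprod => ->.
- by apply: (@Sigma_seq_prefix _ _ [:: t]); rewrite cats1 et.
- by rewrite !map_cat et map_tlow_conj // -et.
Qed.

Lemma all_tlow (P : pred nat) L s :
  map (@tlow n) L = s -> all P s -> all (fun a => P (tlow a)) L.
Proof. by move=> <-; rewrite all_map. Qed.

(* An element of Sigma is determined by its product and its lower endpoints: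
   peel off the last factor with maximal lower endpoint and recurse. *)
Lemma Sigma_seq_unique L L' : Sigma_seq L -> Sigma_seq L' ->
  prodr L = prodr L' -> map (@tlow n) L = map (@tlow n) L' -> L = L'.
Proof.
move eqm: (size L) => m; elim: m L L' eqm => [|m IH] L L' hs hL hL' hp hm.
  by move/(congr1 size): hm; rewrite !size_map (size0nil hs) => /esym/size0nil.
have [la [x [lb [es hla hlb]]]] : exists la x lb,
    [/\ map (@tlow n) L = la ++ x :: lb, all (fun a => a <= x) la
      & all (fun b => b < x) lb].
  by apply: split_last_max; rewrite -size_eq0 size_map hs.
have [A [t [B [eL hA ht hB]]]] := map_eq_cat_cons es.
have [A' [t' [B' [eL' hA' ht' hB']]]] := map_eq_cat_cons (etrans (esym hm) es).
subst L L'.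
have [x0 [lx0 et hS eprod emap]] :=
  peel_last_max hL ht (all_tlow hA hla) (all_tlow hB hlb).
have [x0' [lx0' et' hS' eprod' emap']] :=
  peel_last_max hL' ht' (all_tlow hA' hla) (all_tlow hB' hlb).
have ex0 : x0' = x0 by apply: val_inj; rewrite lx0 lx0'.
have ett : t' = t by rewrite et et' ex0 hp.
subst t'; have /eqP sA : size A == size A'.
  by rewrite -(size_map (@tlow n)) hA -hA' size_map.
have : A ++ [seq b ^ t | b <- B] = A' ++ [seq b ^ t | b <- B'].
  apply: IH hS hS' _ _.
  - by move: hs; rewrite !size_cat size_map /= addnS => /eq_add_S.
  - by apply: (mulgI t); move: eprod eprod'; rewrite /pmul => -> ->.
  - by rewrite emap emap' !map_cat hA hA' hB hB'.
by move/eqP; rewrite eqseq_cat // => /andP [/eqP -> /eqP /(inj_map (conjg_inj t)) ->].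
Qed.

End Uniqueness.

Section BraidMoves.
Variables n k : nat.
Local Notation P := {perm 'I_n}.
Implicit Types (g h : k.-tuple P).

Lemma tuple_replace2 g h (l l1 : 'I_k) : val l1 = l.+1 ->
  (forall m, m != l -> m != l1 -> tnth h m = tnth g m) ->
  (h : seq P) = take l g ++ [:: tnth h l; tnth h l1] ++ drop l.+2 g.
Proof.
move=> e1 hm; have hl1 := ltn_ord l1; rewrite e1 in hl1.
have agree i : i < k -> i != l -> i != l.+1 -> nth 1 h i = nth 1 g i.
  move=> hi il il1; rewrite -(tnth_nth 1 h (Ordinal hi)) -(tnth_nth 1 g (Ordinal hi)).
  by rewrite hm // -val_eqE e1.
rewrite -[LHS](cat_take_drop l) (drop_nth 1) ?size_tuple 1?ltnW //.
rewrite (drop_nth 1) ?size_tuple //.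
rewrite /= (tnth_nth 1) (tnth_nth 1 h l1) e1; congr (_ ++ _ :: _ :: _).
  apply: (@eq_from_nth _ 1) => [|i hi]; first by rewrite !size_takel ?size_tuple // ltnW.
  rewrite size_takel in hi; last by rewrite size_tuple ltnW.
  by rewrite !nth_take //; apply: agree; lia.
apply: (@eq_from_nth _ 1) => [|i]; rewrite !size_drop !size_tuple // => hi.
by rewrite !nth_drop; apply: agree; lia.
Qed.

Lemma SigmaE g : Sigma g = Sigma_seq g.
Proof. by rewrite /Sigma /Sigma_seq size_tuple. Qed.

Lemma Pmap_swap g h (l l1 : 'I_k) :
  (forall m, m != l -> m != l1 -> tnth h m = tnth g m) ->
  tlow (tnth h l) = tlow (tnth g l1) -> tlow (tnth h l1) = tlow (tnth g l) ->
  Pmap h = seq_act (tperm l l1) (Pmap g).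
Proof.
move=> hm e1 e2; apply: eq_from_tnth => m.
rewrite /Pmap /seq_act tnth_mktuple !tnth_map tpermV.
by case: tpermP => [->|->|/eqP n1 /eqP n2] //; rewrite hm.
Qed.

Lemma replace_adjacent g h (l l1 : 'I_k) : val l1 = l.+1 -> Sigma g ->
  (forall m, m != l -> m != l1 -> tnth h m = tnth g m) ->
  is_transp (tnth h l) -> is_transp (tnth h l1) ->
  pmul (tnth h l) (tnth h l1) = pmul (tnth g l) (tnth g l1) ->
  tlow (tnth h l) = tlow (tnth g l1) -> tlow (tnth h l1) = tlow (tnth g l) ->
  [/\ Sigma h, prodr h = prodr g & Pmap h = seq_act (tperm l l1) (Pmap g)].
Proof.
move=> e1 hS hm ha hb eprod elow1 elow2.
have hh := tuple_replace2 e1 hm.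
have hg := tuple_replace2 (h := g) e1 (fun _ _ _ => erefl).
have prodr2 (a b : P) : prodr [:: a; b] = pmul a b by rewrite /prodr /= /pmul mul1g.
have ep : prodr h = prodr g by rewrite hh [in RHS]hg !prodr_cat !prodr2 eprod.
split => //; last exact: Pmap_swap.
rewrite !SigmaE in hS *; apply: (Sigma_seq_same hS) => //; last by rewrite !size_tuple.
have /and3P [] := hS; rewrite [in all _ g]hg !all_cat => /and3P [hA _ hB] _ _.
by rewrite hh !all_cat hA hB /= ha hb.
Qed.

(* Each sigma_l stays in Sigma, keeps the product, and acts on P by (l l+1):
   beta moves b to the left and conjugates a by it, betainv the converse; in both
   cases the conjugated factor keeps its (smaller) lower endpoint. *)
Lemma sigma_op_spec g (l l1 : 'I_k) : val l1 = l.+1 -> Sigma g ->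
  [/\ Sigma (sigma_op l l1 g), prodr (sigma_op l l1 g) = prodr g
    & Pmap (sigma_op l l1 g) = seq_act (tperm l l1) (Pmap g)].
Proof.
move=> e1 hS; have nl1l : l1 != l by rewrite eq_ordE e1; lia.
have /and3P [hT _ _] := hS; set a := tnth g l; set b := tnth g l1.
have ha : is_transp a := allP hT a (mem_tnth _ _).
have hb : is_transp b := allP hT b (mem_tnth _ _).
have [p [q [lpq ea la]]] := is_transp_tlow ha.
have [p' [q' [lpq' eb lb]]] := is_transp_tlow hb.
rewrite /sigma_op -/a -/b la lb.
have [epp|npp] := eqVneq (p : nat) p'.
  by apply: replace_adjacent; rewrite // -?/a -?/b ?la ?lb ?epp.
have tnth_beta m : tnth (beta l l1 g) m =
    if m == l then b else if m == l1 then a ^ b else tnth g m.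
  by rewrite /beta tnth_mktuple -/a -/b /pmul /conjg eb tpermV mulgA.
have tnth_betainv m : tnth (betainv l l1 g) m =
    if m == l then b ^ a else if m == l1 then a else tnth g m.
  by rewrite /betainv tnth_mktuple -/a -/b /pmul /conjg mulgA.
case: ifP => hlt.
- apply: replace_adjacent; rewrite // ?tnth_beta ?eqxx ?(negbTE nl1l) -?/a -?/b //.
  + by move=> m /negbTE ml /negbTE ml1; rewrite tnth_beta ml ml1.
  + exact: is_transp_conj.
  + by rewrite /pmul /conjg eb tpermV -!mulgA tperm2 mulg1.
  + by rewrite eb tlow_conj // la.
- have hlt' : (p' < p)%N by move: hlt npp; lia_goal.
  apply: replace_adjacent; rewrite // ?tnth_betainv ?eqxx ?(negbTE nl1l) -?/a -?/b //.
  + by move=> m /negbTE ml /negbTE ml1; rewrite tnth_betainv ml ml1.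
  + exact: is_transp_conj.
  + by rewrite /pmul /conjg mulgA mulgV mul1g.
  + by rewrite ea tlow_conj // lb.
Qed.

End BraidMoves.

Section AdjacentGeneration.
Variable k : nat.
Implicit Types (pi : {perm 'I_k}) (Q : {perm 'I_k} -> Prop).

(* A property stable under left multiplication by adjacent transpositions is
   stable under left multiplication by any transposition (x y): for x < z < y,
   (x y) = (z y)(x z)(z y) with the distance shrinking. *)
Lemma tperm_step_of_adjacent Q :
  (forall pi (l l1 : 'I_k), val l1 = l.+1 -> Q pi -> Q (pmul (tperm l l1) pi)) ->
  forall (x y : 'I_k) pi, Q pi -> Q (pmul (tperm x y) pi).
Proof.
move=> hadj.
suff H d (x y : 'I_k) :
    (y : nat) = (x + d)%N -> forall pi, Q pi -> Q (pmul (tperm x y) pi).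
  move=> x y pi hq; case: (leqP x y) => hxy; first by apply: (H (y - x)%N) => //; lia.
  by rewrite tpermC; apply: (H (x - y)%N) => //; lia.
elim: d x y => [|[|d] IH] x y e pi hq.
- have -> : y = x by apply: val_inj; rewrite /= e addn0.
  by rewrite tperm1 /pmul mulg1.
- by apply: (hadj) => //; rewrite -[val y]/(y : nat) e addn1.
have hz : (x + d.+1 < k)%N by have := ltn_ord y; lia.
set z := Ordinal hz.
have conj3 : pmul (pmul (tperm z y) (tperm x z)) (tperm z y) = tperm x y.
  have -> : pmul (pmul (tperm z y) (tperm x z)) (tperm z y) = tperm x z ^ tperm z y.
    by rewrite /pmul /conjg tpermV.
  by rewrite tpermJ tpermL tpermD // eq_ordE /= ?e; lia.
rewrite -conj3 -!pmulA; apply: (hadj); first by rewrite /= e; lia.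
by apply: IH => //; apply: (hadj) => //; rewrite /= e; lia.
Qed.

Lemma adjacent_tperm_ind Q : Q 1 ->
  (forall pi (l l1 : 'I_k), val l1 = l.+1 -> Q pi -> Q (pmul (tperm l l1) pi)) ->
  forall pi, Q pi.
Proof.
move=> h1 /tperm_step_of_adjacent hstep pi; have [ts -> _] := prod_tpermP pi.
elim/last_ind: ts => [|ts t IH]; first by rewrite big_nil.
by rewrite -cats1 big_cat big_seq1 /=; apply: (hstep t.1 t.2).
Qed.

End AdjacentGeneration.

Section Action.
Variables n k : nat.
Local Notation P := {perm 'I_n}.
Implicit Types (g h : k.-tuple P) (pi : {perm 'I_k}).

Lemma seq_act1 (U : Type) (s : k.-tuple U) : seq_act 1 s = s.
Proof. by apply: eq_from_tnth => m; rewrite /seq_act tnth_mktuple invg1 perm1. Qed.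

Lemma seq_actM (U : Type) pi1 pi2 (s : k.-tuple U) :
  seq_act (pmul pi1 pi2) s = seq_act pi1 (seq_act pi2 s).
Proof. by apply: eq_from_tnth => m; rewrite /seq_act !tnth_mktuple /pmul invMg permM. Qed.

Lemma Sigma_unique h h' : Sigma h -> Sigma h' ->
  prodr h = prodr h' -> Pmap h = Pmap h' -> h = h'.
Proof.
rewrite !SigmaE => hs hs' hp /(congr1 val) hm; apply: val_inj.
exact: Sigma_seq_unique.
Qed.

(* Existence: starting from g, apply the sigma_l along a factorization of pi. *)
Lemma Sigma_orbit_exists pi g : Sigma g ->
  exists h, [/\ Sigma h, prodr h = prodr g & Pmap h = seq_act pi (Pmap g)].
Proof.
move=> hg; elim/adjacent_tperm_ind: pi => [|pi l l1 e [h [hs hp hm]]].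
  by exists g; rewrite seq_act1.
have [hs' hp' hm'] := sigma_op_spec e hs.
by exists (sigma_op l l1 h); rewrite hp' hp hm' hm seq_actM.
Qed.

(* The action: pi . g is the element of Sigma with the product of g and lower
   endpoints pi . P(g); it is well defined by existence and uniqueness. *)
Definition act pi g : k.-tuple P :=
  if [pick h | [&& Sigma h, prodr h == prodr g & Pmap h == seq_act pi (Pmap g)]]
  is Some h then h else g.

Lemma act_spec pi g : Sigma g ->
  [/\ Sigma (act pi g), prodr (act pi g) = prodr g
    & Pmap (act pi g) = seq_act pi (Pmap g)].
Proof.
move=> hg; rewrite /act; case: pickP => [h /and3P [hs /eqP hp /eqP hm] | none] //.
have [h [hs hp hm]] := Sigma_orbit_exists pi hg.
by have := none h; rewrite hs hp hm !eqxx.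
Qed.

Lemma act_eq pi g h : Sigma g -> Sigma h ->
  prodr h = prodr g -> Pmap h = seq_act pi (Pmap g) -> act pi g = h.
Proof.
move=> hg hs hp hm; have [hs' hp' hm'] := act_spec pi hg.
by apply: Sigma_unique; rewrite ?hp ?hp' ?hm ?hm'.
Qed.

Lemma act_is_action : is_Sk_action act.
Proof.
split => [pi g hg | g hg | pi1 pi2 g hg]; first by case: (act_spec pi hg).
  by apply: act_eq; rewrite ?seq_act1.
have [hs2 hp2 hm2] := act_spec pi2 hg; have [hs1 hp1 hm1] := act_spec pi1 hs2.
by apply: act_eq; rewrite ?hp1 ?hp2 ?hm1 ?hm2 ?seq_actM.
Qed.

Lemma act_extends_sigma : extends_sigma act.
Proof.
move=> l l1 e g hg; have [hs hp hm] := sigma_op_spec e hg.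
exact: act_eq.
Qed.

(* An action extending the sigma_l is determined by them, as they generate S_k. *)
Lemma act_unique act' : is_Sk_action act' -> extends_sigma act' ->
  forall pi g, Sigma g -> act' pi g = act pi g.
Proof.
case=> hS' h1' hM' hext' pi; elim/adjacent_tperm_ind: pi => [|pi l l1 e IH] g hg.
  by rewrite h1' //; case: act_is_action => _ -> .
have [hs _ _] := act_spec pi hg.
case: act_is_action => _ _ hM.
by rewrite hM' // IH // hext' // hM // act_extends_sigma.
Qed.

End Action.

Theorem proposition4p2 (n k : nat) (hn : 1 <= n) (hk : 1 <= k) :
  exists act : {perm 'I_k} -> k.-tuple {perm 'I_n} -> k.-tuple {perm 'I_n},
    [/\ is_Sk_action act,
        extends_sigma act,
        (forall act', is_Sk_action act' -> extends_sigma act' ->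
           forall pi g, Sigma g -> act' pi g = act pi g),
        (forall pi g, Sigma g -> Pmap (act pi g) = seq_act pi (Pmap g)) &
        (forall pi g, Sigma g -> (seq_act pi (Pmap g) = Pmap g <-> act pi g = g))].
Proof.
exists (@act n k); split.
- exact: act_is_action.
- exact: act_extends_sigma.
- exact: act_unique.
- by move=> pi g hg; case: (act_spec pi hg).
- move=> pi g hg; have [_ _ hm] := act_spec pi hg; split => [e|e].
    by apply: act_eq; rewrite ?e.
  by rewrite -hm e.
Qed.
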